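(* Let $q_1,\ldots,q_g$ be binary quadratic forms with integer coefficients, let $D\in\mathbb N$, $\mathbf z\in\mathbb Z^2$, and let $d_1,\ldots,d_g$ be positive integers with $\gcd(d_i,D)=1$ for $i=1,\ldots,g$. Then for every $\mathcal R\subset\mathbb R^2$, $$\#(\Lambda_{\mathbf d}\cap\mathcal R\cap\Psi)=\sum_{b\mid\psi(\mathbf d)}\#\bigl(\Lambda^*_{\mathbf c}\cap\mathcal R/b\cap\Psi_b\bigr),$$ where, for each $b$, $\mathbf c=(c_1,\ldots,c_g)$ with $c_i:=d_i/\gcd(d_i,b^2)$.
   Context: $\Lambda_{\mathbf d}:=\{\mathbf x\in\mathbb Z^2:d_i\mid q_i(\mathbf x),\ i=1,\ldots,g\}$; $\Lambda^*_{\mathbf c}:=\{\mathbf x\in\Lambda_{\mathbf c}:\gcd(x_1,x_2,c_1\cdots c_g)=1\}$; $\Psi:=\{\mathbf x\in\mathbb Z^2:\mathbf x\equiv\mathbf z\pmod D\}$; $\Psi_b:=\{\mathbf x\in\mathbb Z^2:b\mathbf x\in\Psi\}$; $\mathcal R/b:=\{\mathbf y/b:\mathbf y\in\mathcal R\}$. The function $\psi$ on $g$-tuples of positive integers is multiplicative (i.e. $\psi(\mathbf d)=\prod_p\psi(p^{v_p(d_1)},\ldots,p^{v_p(d_g)})$) with $\psi(p^{\alpha_1},\ldots,p^{\alpha_g}):=p^{\lceil\max(\alpha_1,\ldots,\alpha_g)/2\rceil}$. *)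

From HB Require Import structures.
From mathcomp Require Import all_boot all_order all_algebra.
From mathcomp Require Import boolp classical_sets functions cardinality reals ereal.
From mathcomp Require Import counting_measure.
Set Implicit Arguments. Unset Strict Implicit. Unset Printing Implicit Defensive.
Import Order.TTheory GRing.Theory Num.Theory.
Local Open Scope ring_scope.
Local Open Scope classical_set_scope.

(* A binary quadratic form with integer coefficients (a,b,c) represents
   q(x1,x2) = a x1^2 + b x1 x2 + c x2^2. *)
Definition bqf := (int * int * int)%type.

Definition qeval (q : bqf) (x : int * int) : int :=
  q.1.1 * x.1 ^+ 2 + q.1.2 * x.1 * x.2 + q.2 * x.2 ^+ 2.

Definition Lambda (g : nat) (q : 'I_g -> bqf) (d : 'I_g -> nat) : set (int * int) :=
  [set x | forall i : 'I_g, ((d i)%:Z %| qeval (q i) x)%Z].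

Definition Lambda_star (g : nat) (q : 'I_g -> bqf) (c : 'I_g -> nat) : set (int * int) :=
  [set x | Lambda q c x /\ gcdz (gcdz x.1 x.2) (\prod_(i < g) c i)%:Z = 1].

Definition Psi (D : nat) (z : int * int) : set (int * int) :=
  [set x | (x.1 = z.1 %[mod D%:Z])%Z /\ (x.2 = z.2 %[mod D%:Z])%Z].

Definition Psi_b (D : nat) (z : int * int) (b : nat) : set (int * int) :=
  [set x | Psi D z (b%:Z * x.1, b%:Z * x.2)].

Definition in_region (R : realType) (Rg : set (R * R)) : set (int * int) :=
  [set x | Rg (x.1%:~R, x.2%:~R)].

Definition region_div (R : realType) (Rg : set (R * R)) (b : nat) : set (R * R) :=
  [set (y.1 / b%:R, y.2 / b%:R) | y in Rg].

(* psi(d) = prod_p p^(ceil(max_i v_p(d_i) / 2)); the product runs over the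
   primes dividing some d_i (other primes contribute p^0 = 1). *)
Definition psi (g : nat) (d : 'I_g -> nat) : nat :=
  \prod_(p <- primes (\prod_(i < g) d i)) (p ^ uphalf (\max_(i < g) logn p (d i)))%N.

Definition cvec (g : nat) (d : 'I_g -> nat) (b : nat) : 'I_g -> nat :=
  fun i => (d i %/ gcdn (d i) (b ^ 2))%N.

(* Write x in Lambda_d as b y, where b := gcd(x1, x2, psi(d)) is the level of x.
   Since d_i | b^2 n iff c_i | n, multiplication by b maps Lambda_c onto the
   points of Lambda_d divisible by b, and b y lies in R and Psi iff y lies in
   R/b and Psi_b.  As gcd(b y, psi(d)) = b gcd(y, psi(d)/b), the level of b y
   is b exactly when y is coprime to psi(d)/b.  Because psi(d) is the least m
   with d_i | m^2 for all i, the primes dividing psi(d)/b are those dividing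
   some c_i, so this is the condition gcd(y1, y2, c_1 ... c_g) = 1 defining
   Lambda*_c.  Counting the fibres of the level over the divisors of psi(d)
   gives the identity. *)

From HB Require Import structures.
From mathcomp Require Import all_boot all_order all_algebra finmap.
From mathcomp Require Import boolp classical_sets functions cardinality reals ereal.
From mathcomp Require Import counting_measure.
From mathcomp Require Import zify ring.
Set Implicit Arguments. Unset Strict Implicit. Unset Printing Implicit Defensive.
Import Order.TTheory GRing.Theory Num.Theory.
Local Open Scope ring_scope.
Local Open Scope classical_set_scope.

Section Counting.
Variables (T U : choiceType) (R : realType).

Lemma counting_setU (A B : set T) : A `&` B = set0 ->
  @counting _ R (A `|` B) = (counting A + counting B)%E.
Proof.
move=> AB0; rewrite /counting.
have [fA|iA] := pselect (finite_set A); last first.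
  rewrite (asboolF iA) asboolF ?finite_setU => [|[]//].
  by rewrite addye //; case: ifPn.
have [fB|iB] := pselect (finite_set B); last first.
  rewrite (asboolF iB) asboolF ?finite_setU => [|[]//].
  by rewrite addey // asboolT.
rewrite !asboolT ?finite_setU // fset_setU //.
have := cardfsUI (fset_set A) (fset_set B).
by rewrite -fset_setI // AB0 fset_set0 cardfs0 addn0 => ->; rewrite natrD EFinD.
Qed.

Lemma counting_image (f : T -> U) (A : set T) : injective f ->
  @counting _ R (f @` A) = counting A.
Proof.
move=> f_inj; rewrite /counting.
have [fA|iA] := pselect (finite_set A).
  rewrite asboolT; last exact: finite_image.
  by rewrite asboolT // fset_set_image // card_imfset.
rewrite !asboolF //; apply: contra_not iA => /(finite_preimage (in2W f_inj)).
exact/sub_finite_set/preimage_image.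
Qed.

Lemma counting_fibres (I : eqType) (f : T -> I) (s : seq I) (A : set T) :
  uniq s -> (forall x, A x -> f x \in s) ->
  @counting _ R A = (\sum_(i <- s) counting (A `&` f @^-1` [set i]))%E.
Proof.
elim: s A => [|j s IHs] A /=.
  move=> _ fA; suff -> : A = set0.
    by rewrite big_nil /counting asboolT // fset_set0.
  by apply/seteqP; split => // x /fA.
move=> /andP[js us] fA; rewrite big_cons.
rewrite -{1}(setIT A) -(setUv (f @^-1` [set j])) setIUr.
rewrite counting_setU; last by rewrite setIACA setICr setI0.
congr (_ + _)%E; rewrite (IHs _ us) => [|x [Ax /eqP fxj]]; last first.
  by move: (fA x Ax); rewrite inE (negbTE fxj).
apply: eq_big_seq => i si; congr counting; rewrite -setIA; congr (_ `&` _).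
apply/seteqP; split => [x []//|x /= ->]; split => //.
by move=> eij; move: js; rewrite -eij si.
Qed.

End Counting.

Section Divisibility.
Local Open Scope nat_scope.

Lemma dvdn_from_log m n : 0 < m -> 0 < n ->
  (forall p, prime p -> logn p m <= logn p n) -> m %| n.
Proof.
move=> m0 n0 le_mn; apply/(dvdn_partP _ m0) => p.
by rewrite mem_primes p_part => /and3P[pp _ _]; rewrite pfactor_dvdn ?le_mn.
Qed.

Lemma logn_prod_pfactor (s : seq nat) (e : nat -> nat) p :
  prime p -> uniq s -> all prime s ->
  logn p (\prod_(r <- s) r ^ e r) = if p \in s then e p else 0.
Proof.
move=> pp; elim: s => [|r s IHs] /=; first by rewrite big_nil logn1.
move=> /andP[rs us] /andP[pr ps]; rewrite big_cons inE.
have s_gt0 : 0 < \prod_(t <- s) t ^ e t.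
  rewrite big_seq prodn_cond_gt0 // => t /(allP ps) /prime_gt0 t0.
  by rewrite expn_gt0 t0.
rewrite lognM ?expn_gt0 ?(prime_gt0 pr) // IHs // lognX logn_prime //.
by case: (eqVneq p r) => [->|_] /=; rewrite ?(negbTE rs) ?muln1 ?addn0 ?muln0.
Qed.

Lemma coprime_from_primes m n : 0 < n ->
  (forall p, prime p -> p %| n -> ~~ (p %| m)) -> coprime m n.
Proof.
move=> n0 no_common; rewrite /coprime eqn_leq gcdn_gt0 n0 orbT andbT leqNgt.
apply/negP => /pdiv_prime pp; set p := pdiv _ in pp.
have := no_common p pp (dvdn_trans (pdiv_dvd _) (dvdn_gcdr m n)).
by rewrite (dvdn_trans (pdiv_dvd _) (dvdn_gcdl m n)).
Qed.

Lemma dvdn_mul_divgcd d b m : 0 < d -> (d %| b * m) = (d %/ gcdn d b %| m).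
Proof.
move=> d0; have g0 : 0 < gcdn d b by rewrite gcdn_gt0 d0.
have cop : coprime (d %/ gcdn d b) (b %/ gcdn d b).
  rewrite /coprime -(eqn_pmul2r g0) mul1n muln_gcdl.
  by rewrite !divnK ?dvdn_gcdl ?dvdn_gcdr.
rewrite -(Gauss_dvdr _ cop) -[in RHS](dvdn_pmul2r g0) mulnAC.
by rewrite !divnK ?dvdn_gcdl ?dvdn_gcdr.
Qed.

End Divisibility.

Section Psi.
Local Open Scope nat_scope.
Variables (g : nat) (d : 'I_g -> nat).
Hypothesis d_gt0 : forall i, 0 < d i.

Lemma psi_gt0 : 0 < psi d.
Proof.
rewrite /psi big_seq prodn_cond_gt0 // => p.
by rewrite mem_primes => /andP[/prime_gt0 p0 _]; rewrite expn_gt0 p0.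
Qed.

Lemma logn_psi p : prime p -> logn p (psi d) = uphalf (\max_(i < g) logn p (d i)).
Proof.
move=> pp; rewrite /psi logn_prod_pfactor ?primes_uniq //; last first.
  by apply/allP => r; rewrite mem_primes => /andP[].
case: ifP => // /negbT p_prod; suff -> : \max_(i < g) logn p (d i) = 0 by [].
apply/eqP; rewrite -leqn0; apply/bigmax_leqP => i _; rewrite leqn0 eqn0Ngt.
apply: contra p_prod; rewrite logn_gt0 !mem_primes pp prodn_gt0 //=.
by move=> /andP[_ /dvdn_trans]; apply; rewrite (bigD1 i) //= dvdn_mulr.
Qed.

Lemma dvdn_sqr_psi i : d i %| psi d ^ 2.
Proof.
apply: dvdn_from_log; rewrite ?expn_gt0 ?psi_gt0 // => p pp.
rewrite lognX logn_psi // uphalfE.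
have : logn p (d i) <= \max_(j < g) logn p (d j) by apply: (leq_bigmax i).
move: (\max_(j < g) _) => M; lia.
Qed.

Lemma psi_dvdn m : 0 < m -> (forall i, d i %| m ^ 2) -> psi d %| m.
Proof.
move=> m0 dm; apply: dvdn_from_log; rewrite ?psi_gt0 // => p pp.
rewrite logn_psi // uphalfE.
have : \max_(j < g) logn p (d j) <= 2 * logn p m.
  apply/bigmax_leqP => i _; rewrite -lognX.
  by apply: dvdn_leq_log; rewrite ?expn_gt0 ?m0.
move: (\max_(j < g) _) => M; lia.
Qed.

Section Cofactor.
Variable b : nat.
Hypothesis b_psi : b %| psi d.
Let k := psi d %/ b.

Lemma psi_cofactorE : psi d = b * k.
Proof. by rewrite mulnC divnK. Qed.

Lemma divisor_cofactor_gt0 : 0 < b /\ 0 < k.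
Proof. by apply/andP; rewrite -muln_gt0 -psi_cofactorE psi_gt0. Qed.

Lemma cvec_dvdn_sqr i : cvec d b i %| k ^ 2.
Proof.
by rewrite /cvec -dvdn_mul_divgcd // -expnMn -psi_cofactorE dvdn_sqr_psi.
Qed.

Lemma prime_dvdn_cvec p : prime p -> p %| k -> [exists i, p %| cvec d b i].
Proof.
move=> pp p_k; apply: contraT => /existsPn p_cvec.
have [b0 k0] := divisor_cofactor_gt0.
have kp0 : 0 < k %/ p by rewrite divn_gt0 ?prime_gt0 // dvdn_leq.
have d_sqr i : d i %| (b * (k %/ p)) ^ 2.
  rewrite expnMn dvdn_mul_divgcd //.
  have cop : coprime (cvec d b i) (p ^ 2).
    by rewrite coprimeXr // coprime_sym prime_coprime.
  by rewrite -(Gauss_dvdl _ cop) -expnMn divnK ?cvec_dvdn_sqr.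
have bkp0 : 0 < b * (k %/ p) by rewrite muln_gt0 b0.
(* b * (k / p) would be a smaller m than psi d with d i %| m ^ 2 for all i. *)
have := psi_dvdn bkp0 d_sqr.
rewrite psi_cofactorE dvdn_pmul2l // => /(dvdn_leq kp0).
by rewrite leqNgt ltn_Pdiv ?prime_gt1.
Qed.

Lemma coprime_prod_cvec G :
  coprime G (\prod_(i < g) cvec d b i) = coprime G k.
Proof.
apply/idP/idP => [cop_prod|cop_k].
  apply: coprime_from_primes => [|p pp /(prime_dvdn_cvec pp) /existsP[i p_ci]].
    by case: divisor_cofactor_gt0.
  have p_prod : p %| \prod_(j < g) cvec d b j.
    by rewrite (dvdn_trans p_ci) // (bigD1 i) //= dvdn_mulr.
  apply: contraL cop_prod => p_G; apply/negP => /(coprime_dvdl p_G).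
  by rewrite prime_coprime // p_prod.
apply: (big_ind (coprime G)); first exact: coprimen1.
  by move=> x y; rewrite coprimeMr => -> ->.
by move=> i _; apply: coprime_dvdr (cvec_dvdn_sqr i) (coprimeXr 2 cop_k).
Qed.

End Cofactor.
End Psi.

Definition content (x : int * int) : nat := gcdn `|x.1| `|x.2|.

Definition scale (b : nat) (x : int * int) : int * int :=
  (b%:Z * x.1, b%:Z * x.2).

Lemma scale_inj b : (0 < b)%N -> injective (scale b).
Proof.
move=> b0 [x1 x2] [y1 y2] [e1 e2]; have bz : b%:Z != 0 by rewrite eqz_nat -lt0n.
by rewrite (mulfI bz e1) (mulfI bz e2).
Qed.

Lemma qeval_scale (q : bqf) b x : qeval q (scale b x) = b%:Z ^+ 2 * qeval q x.
Proof. by rewrite /qeval /=; ring. Qed.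

Lemma content_scale b x : content (scale b x) = (b * content x)%N.
Proof. by rewrite /content /= !abszM muln_gcdr. Qed.

Lemma dvdn_content_scale b x : (b %| content x)%N -> exists y, x = scale b y.
Proof.
case: x => x1 x2 /= b_x; exists ((x1 %/ b%:Z)%Z, (x2 %/ b%:Z)%Z).
rewrite /scale /= !(mulrC b%:Z) !divzK // dvdzE /=.
- exact: dvdn_trans b_x (dvdn_gcdr _ _).
- exact: dvdn_trans b_x (dvdn_gcdl _ _).
Qed.

Lemma Lambda_scale g (q : 'I_g -> bqf) (d : 'I_g -> nat) b y :
  (forall i, (0 < d i)%N) -> Lambda q d (scale b y) <-> Lambda q (cvec d b) y.
Proof.
move=> d_gt0; split => L i; have := L i;
  by rewrite qeval_scale !dvdzE abszM abszX /= dvdn_mul_divgcd.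
Qed.

Lemma Lambda_starE g (q : 'I_g -> bqf) (c : 'I_g -> nat) y :
  Lambda_star q c y <-> Lambda q c y /\ coprime (content y) (\prod_(i < g) c i).
Proof.
rewrite /Lambda_star /coprime; split => -[L cop]; split => //.
  by case: cop => ->.
by rewrite /gcdz (eqP cop).
Qed.

Lemma in_region_scale (R : realType) (Rg : set (R * R)) b y : (0 < b)%N ->
  in_region Rg (scale b y) <-> in_region (region_div Rg b) y.
Proof.
move=> b0; have bR0 : (b%:R : R) != 0 by rewrite pnatr_eq0 -lt0n.
rewrite /in_region /region_div /= !intrM; split => [Ry | [[r1 r2] Rr [<- <-]]].
  by exists (b%:R * y.1%:~R, b%:R * y.2%:~R) => //=; rewrite !(mulrC b%:R) !mulfK.
by rewrite !(mulrC b%:R) !divfK.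
Qed.

Section Level.
Variables (R : realType) (g : nat) (q : 'I_g -> bqf) (D : nat) (z : int * int).
Variables (d : 'I_g -> nat) (Rg : set (R * R)).
Hypothesis d_gt0 : forall i, (0 < d i)%N.

Definition level (x : int * int) : nat := gcdn (content x) (psi d).

Lemma level_scale b y : (b %| psi d)%N ->
  level (scale b y) = (b * gcdn (content y) (psi d %/ b))%N.
Proof.
by move=> b_psi; rewrite /level content_scale {1}(psi_cofactorE b_psi) muln_gcdr.
Qed.

Lemma image_scale_level b : (b %| psi d)%N ->
  scale b @` (Lambda_star q (cvec d b) `&` in_region (region_div Rg b)
              `&` Psi_b D z b) =
  Lambda q d `&` in_region Rg `&` Psi D z `&` level @^-1` [set b].
Proof.
move=> b_psi; have [b0 _] := divisor_cofactor_gt0 b_psi.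
have levelE y : level (scale b y) = b <-> coprime (content y) (psi d %/ b).
  rewrite level_scale // /coprime; split => [lvl|/eqP ->]; last exact: muln1.
  by rewrite -(eqn_pmul2l b0) lvl muln1.
apply/seteqP; split => [_ [y [[/Lambda_starE[Ly cop] Ry] Py] <-] | x].

  split; last by apply/levelE; rewrite -(coprime_prod_cvec d_gt0 b_psi).
  by split; [split; [apply/Lambda_scale | apply/in_region_scale] |].
move=> [[[Lx Rx] Px] lx]; have [y xE] : exists y, x = scale b y.
  by apply: dvdn_content_scale; rewrite -lx dvdn_gcdl.
move: Lx Rx Px lx; rewrite xE => /(Lambda_scale _ _ _ d_gt0) Ly.
move=> /(in_region_scale _ _ b0) Ry Py /levelE cop.
exists y => //; split => //; split; last exact: Ry.
by apply/Lambda_starE; split; rewrite ?(coprime_prod_cvec d_gt0 b_psi).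
Qed.

End Level.

Theorem lemma2p2 (R : realType) (g : nat) (q : 'I_g -> bqf) (D : nat)
  (z : int * int) (d : 'I_g -> nat)
  (dpos : forall i, (0 < d i)%N) (dcop : forall i, coprime (d i) D)
  (Rg : set (R * R)) :
  @counting _ R (Lambda q d `&` in_region Rg `&` Psi D z) =
  (\sum_(b <- divisors (psi d))
     @counting _ R (Lambda_star q (cvec d b) `&` in_region (region_div Rg b)
               `&` Psi_b D z b))%E.
Proof.
have psi0 := psi_gt0 d.
rewrite (@counting_fibres _ R _ (level d) (divisors (psi d))) ?divisors_uniq //;
  last by move=> x _; rewrite -dvdn_divisors // dvdn_gcdr.
apply: eq_big_seq => b; rewrite -dvdn_divisors // => b_psi.
have [b0 _] := divisor_cofactor_gt0 b_psi.
rewrite -(image_scale_level q D z Rg dpos b_psi).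
exact/counting_image/scale_inj.
Qed.
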